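(* Let $\mathcal{K}$ be a field with a nonarchimedean valuation and let $B\in\mathcal{K}^{n\times n}$ be an upper triangular matrix such that $\nu(\det B(\{1,\dots,|S|\},S))\in\mathbb{R}$ for all $S\subseteq[n]$ and the function $2^{[n]}\to\mathbb{R}$, $S\mapsto \nu(\det B(\{1,\dots,|S|\},S))$, is submodular. Then \[ \nu(\det B(\{1,\dots,|S|\},S))\;\ge\;\nu(\det B(T,S)) \] for all $S,T\subseteq[n]$ with $|S|=|T|$.
   Context: $\nu=-\mathrm{val}$ is the negative of the valuation, extended by $\nu(0)=-\infty$. $B(T,S)$ is the submatrix with rows $T$ and columns $S$, and the determinant of the empty matrix is $1$. A function $F:2^{[n]}\to\mathbb{R}$ is submodular if $F(S\cap T)+F(S\cup T)\le F(S)+F(T)$ for all $S,T$. *)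

From HB Require Import structures.
From mathcomp Require Import all_boot all_order all_algebra.
From mathcomp Require Import reals constructive_ereal.
Set Implicit Arguments. Unset Strict Implicit. Unset Printing Implicit Defensive.
Import Order.TTheory GRing.Theory Num.Theory.
Local Open Scope ring_scope.

(* A (real-valued) nonarchimedean valuation on a field K: val is only
   meaningful on nonzero elements (val 0 = +oo by convention, encoded in nu). *)
Definition nonarch_valuation (K : fieldType) (R : realType) (val : K -> R) : Prop :=
  (forall x y : K, x != 0 -> y != 0 -> val (x * y) = val x + val y) /\
  (forall x y : K, x != 0 -> y != 0 -> x + y != 0 ->
     Num.min (val x) (val y) <= val (x + y)).

Definition nu (K : fieldType) (R : realType) (val : K -> R) (x : K) : \bar R :=
  if x == 0 then -oo%E else (- val x)%:E.

(* det B(T,S): rows T and columns S, both listed in increasing order;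
   only meaningful when #|T| = #|S| (otherwise set to 0, never used). *)
Definition minor (K : fieldType) (n : nat) (B : 'M[K]_n) (T S : {set 'I_n}) : K :=
  if #|S| =P #|T| is ReflectT h then
    \det (\matrix_(i < #|S|, j < #|S|) B (enum_val (cast_ord h i)) (enum_val j))
  else 0.

(* the row set {1,...,k} (0-based: indices < k) *)
Definition first_rows (n k : nat) : {set 'I_n} := [set i : 'I_n | (i < k)%N].

Definition upper_triangular (K : fieldType) (n : nat) (B : 'M[K]_n) : Prop :=
  forall i j : 'I_n, (j < i)%N -> B i j = 0.

Definition submodular (n : nat) (R : realType) (F : {set 'I_n} -> \bar R) : Prop :=
  forall S T : {set 'I_n}, (F (S :&: T) + F (S :|: T) <= F S + F T)%E.

From HB Require Import structures.
From mathcomp Require Import all_boot all_order all_algebra.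
From mathcomp Require Import reals constructive_ereal.
From mathcomp Require Import fingroup perm.
From mathcomp Require Import lra ring.
Set Implicit Arguments. Unset Strict Implicit. Unset Printing Implicit Defensive.
Import Order.TTheory GRing.Theory Num.Theory.
Local Open Scope ring_scope.

(* Write V(X) for the valuation of the minor det B([|X|], X) on the first rows;
   the hypotheses say that V is finite and supermodular.  We show
   val det B(r, c) >= V(c) for all row and column lists inside [m], by induction
   on m, the new index being z = m.  Row z of B vanishes left of column z, so if z
   is a row but not a column the minor is 0, and if z is both, expanding along
   row z splits off B_zz, of valuation V([m+1]) - V([m]); supermodularity for
   z+Y and [m] concludes.  If z is a column (the others forming Y, |Y| = j) but
   not a row, write row t of B(_, Y) as a combination a_t of the first j rows,
   leaving a residue rho_Y(t) in column z.  Then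
   det B(r, c) = +- det [a_r | rho_r] det B([j], Y); Cramer's rule and the
   induction hypothesis give val a_t >= 0, and val rho_Y(t) >= V(Y+z) - V(Y):
   with equality for t = j, and for t > j by induction on m - j, since adjoining
   a column y to Y gives rho_Y(t) = rho_{Y+y}(t) + a'_t rho_Y(j), while
   supermodularity makes the increment V(Y+z) - V(Y) grow with Y. *)

Section Valuation.
Variables (K : fieldType) (R : realType) (v : K -> R).
Hypothesis v_nonarch : nonarch_valuation v.

Lemma valM x y : x != 0 -> y != 0 -> v (x * y) = v x + v y.
Proof. by case: v_nonarch => vM _; exact: vM. Qed.

Lemma val1 : v 1 = 0.
Proof. by have := valM (oner_neq0 K) (oner_neq0 K); rewrite mulr1 => h; lra. Qed.

Lemma valN x : v (- x) = v x.
Proof.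
have N1_neq0 : (-1 : K) != 0 by rewrite oppr_eq0 oner_neq0.
have valN1 : v (-1) = 0 by have := valM N1_neq0 N1_neq0; rewrite mulrNN mulr1 val1 => h; lra.
have [->|x0] := eqVneq x 0; first by rewrite oppr0.
by rewrite -mulN1r valM // valN1 add0r.
Qed.

Lemma val_signM (p : nat) x : v ((-1) ^+ p * x) = v x.
Proof. by rewrite -signr_odd; case: odd; rewrite ?expr1 ?mulN1r ?valN ?expr0 ?mul1r. Qed.

Lemma valV x : x != 0 -> v x^-1 = - v x.
Proof. by move=> x0; have := valM x0 (invr_neq0 x0); rewrite mulfV // val1 => h; lra. Qed.

Definition val_ge (x : K) (b : R) := (x == 0) || (b <= v x).

Lemma val_geE x b : val_ge x b = (nu v x <= (- b)%:E)%E.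
Proof. by rewrite /val_ge /nu; case: eqP => _ /=; rewrite ?leNye ?lee_fin ?lerN2. Qed.

Lemma val_ge0 b : val_ge 0 b.
Proof. by rewrite /val_ge eqxx. Qed.

Lemma val_ge_val x : val_ge x (v x).
Proof. by rewrite /val_ge lexx orbT. Qed.

Lemma val_geW x b b' : b' <= b -> val_ge x b -> val_ge x b'.
Proof. by move=> hb /orP[/eqP->|h]; rewrite ?val_ge0 // /val_ge (le_trans hb h) orbT. Qed.

Lemma val_geD x y b : val_ge x b -> val_ge y b -> val_ge (x + y) b.
Proof.
have [->|x0] := eqVneq x 0; first by rewrite add0r.
have [->|y0] := eqVneq y 0; first by rewrite addr0.
have [->|xy0] := eqVneq (x + y) 0; first by move=> *; exact: val_ge0.
rewrite /val_ge (negPf x0) (negPf y0) (negPf xy0) /= => hx hy.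
by case: v_nonarch => _ /(_ x y x0 y0 xy0); apply: le_trans; rewrite le_min hx hy.
Qed.

Lemma val_geM x y a b : val_ge x a -> val_ge y b -> val_ge (x * y) (a + b).
Proof.
have [->|x0] := eqVneq x 0; first by rewrite mul0r => *; exact: val_ge0.
have [->|y0] := eqVneq y 0; first by rewrite mulr0 => *; exact: val_ge0.
by rewrite /val_ge mulf_eq0 (negPf x0) (negPf y0) valM //=; exact: lerD.
Qed.

Lemma val_ge_sign (p : nat) : val_ge ((-1) ^+ p) 0.
Proof. by rewrite /val_ge -[_ ^+ p]mulr1 val_signM val1 lexx orbT. Qed.

Lemma val_ge_sum I (s : seq I) (P : pred I) (F : I -> K) b :
  (forall i, P i -> val_ge (F i) b) -> val_ge (\sum_(i <- s | P i) F i) b.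
Proof.
by move=> hF; apply: (big_ind (val_ge^~ b)); [exact: val_ge0 | move=> x y; exact: val_geD |].
Qed.

Lemma val_ge_prod I (s : seq I) (P : pred I) (F : I -> K) :
  (forall i, P i -> val_ge (F i) 0) -> val_ge (\prod_(i <- s | P i) F i) 0.
Proof.
move=> hF; apply: (big_ind (val_ge^~ 0)) => //; first by rewrite /val_ge val1 lexx orbT.
by move=> x y hx hy; rewrite -[0]addr0; exact: val_geM.
Qed.

Lemma val_ge_det k (A : 'M[K]_k) : (forall i j, val_ge (A i j) 0) -> val_ge (\det A) 0.
Proof.
move=> hA; apply: val_ge_sum => s _; rewrite -[0]addr0.
by apply: val_geM; [exact: val_ge_sign | exact: val_ge_prod].
Qed.

End Valuation.

Section Images.
Variable T : finType.

Definition im k (f : 'I_k -> T) : {set T} := [set f i | i : 'I_k].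

Lemma card_im k (f : 'I_k -> T) : injective f -> #|im f| = k.
Proof. by move=> f_inj; rewrite card_imset // card_ord. Qed.

Lemma im_cast k1 k2 (e : k2 = k1) (f : 'I_k1 -> T) : im (f \o cast_ord e) = im f.
Proof.
apply/setP => x; apply/imsetP/imsetP => [[i _ ->]|[i _ ->]]; first by exists (cast_ord e i).
by exists (cast_ord (esym e) i) => //=; rewrite cast_ordKV.
Qed.

Lemma im_enum_val (A : {set T}) : im (@enum_val _ (mem A)) = A.
Proof.
apply/setP => x; apply/imsetP/idP => [[i _ ->]|xA]; first exact: enum_valP.
by exists (enum_rank_in xA x) => //; rewrite enum_rankK_in.
Qed.

Lemma im_lift k (f : 'I_k.+1 -> T) i0 : im f = f i0 |: im (f \o lift i0).
Proof.
apply/setP => x; rewrite in_setU1.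
apply/imsetP/orP => [[i _ ->]|[/eqP->|/imsetP[i _ ->]]]; last 2 first.
- by exists i0.
- by exists (lift i0 i).
by case: (unliftP i0 i) => [i'|] ->; [right; apply/imsetP; exists i' | left].
Qed.

Lemma exists_perm_im k (f g : 'I_k -> T) :
  injective f -> im f = im g -> exists s : 'S_k, forall i, f i = g (s i).
Proof.
move=> f_inj fg.
have g_onto i : exists j, g j == f i.
  have /imsetP[j _ ->] : f i \in im g by rewrite -fg; apply/imsetP; exists i.
  by exists j.
pose h i := odflt i [pick j | g j == f i].
have hK i : g (h i) = f i.
  by rewrite /h; case: pickP => [j /eqP //|none]; case: (g_onto i) => j; rewrite none.
have h_inj : injective h by move=> i j hij; apply: f_inj; rewrite -hK hij hK.
by exists (perm h_inj) => i; rewrite permE hK.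
Qed.

Definition extend j (f : 'I_j -> T) (y : T) : 'I_j.+1 -> T :=
  fun i => if unlift ord_max i is Some i' then f i' else y.

Lemma extend_max j (f : 'I_j -> T) y : extend f y ord_max = y.
Proof. by rewrite /extend unlift_none. Qed.

Lemma extend_lift j (f : 'I_j -> T) y i : extend f y (lift ord_max i) = f i.
Proof. by rewrite /extend liftK. Qed.

Lemma im_extend j (f : 'I_j -> T) y : im (extend f y) = y |: im f.
Proof.
rewrite (im_lift _ ord_max) extend_max; congr (_ |: _).
by apply/setP => x; apply/imsetP/imsetP => -[i _ ->]; exists i; rewrite //= extend_lift.
Qed.

Lemma extend_inj j (f : 'I_j -> T) y : injective f -> y \notin im f -> injective (extend f y).
Proof.
move=> f_inj yf i1 i2; rewrite /extend.
case: (unliftP ord_max i1) => [i1'|] ->; case: (unliftP ord_max i2) => [i2'|] -> //.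
- by move/f_inj ->.
- by move=> e; case/negP: yf; rewrite -e; apply/imsetP; exists i1'.
- by move=> e; case/negP: yf; rewrite e; apply/imsetP; exists i2'.
Qed.

End Images.

Lemma expand_det_row_single (F : comRingType) k (A : 'M[F]_k) i j :
  (forall j', j' != j -> A i j' = 0) -> \det A = A i j * cofactor A i j.
Proof.
move=> Ai0; rewrite (expand_det_row _ i) (bigD1 j) //= big1 ?addr0 // => j' /Ai0 ->.
exact: mul0r.
Qed.

Lemma expand_det_col_single (F : comRingType) k (A : 'M[F]_k) i j :
  (forall i', i' != i -> A i' j = 0) -> \det A = A i j * cofactor A i j.
Proof.
move=> A0j; rewrite (expand_det_col _ j) (bigD1 i) //= big1 ?addr0 // => i' /A0j ->.
exact: mul0r.
Qed.

Lemma det_zero_row (F : comRingType) k (A : 'M[F]_k) i : (forall j, A i j = 0) -> \det A = 0.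
Proof. by move=> Ai0; rewrite (expand_det_row _ i) big1 // => j _; rewrite Ai0 mul0r. Qed.

Section Subdeterminants.
Variables (K : fieldType) (n : nat) (B : 'M[K]_n).

Definition subdet k (r c : 'I_k -> 'I_n) : K := \det (\matrix_(i, j) B (r i) (c j)).

Lemma subdet_cast k1 k2 (e : k1 = k2) (r c : 'I_k1 -> 'I_n) :
  subdet r c = subdet (r \o cast_ord (esym e)) (c \o cast_ord (esym e)).
Proof.
case: k2 / e; congr (\det _); apply/matrixP => i j; rewrite !mxE /=.
by rewrite !cast_ord_id.
Qed.

Lemma subdet_reorder k (r1 r2 c1 c2 : 'I_k -> 'I_n) :
  injective r1 -> injective c1 -> im r1 = im r2 -> im c1 = im c2 ->
  exists p : nat, subdet r1 c1 = (-1) ^+ p * subdet r2 c2.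
Proof.
move=> r1_inj c1_inj er ec.
have [s hs] := exists_perm_im r1_inj er.
have [t ht] := exists_perm_im c1_inj ec.
rewrite /subdet; have -> : \matrix_(i, j) B (r1 i) (c1 j) =
    perm_mx s *m (\matrix_(i, j) B (r2 i) (c2 j)) *m perm_mx t^-1.
  by rewrite -row_permE -col_permE; apply/matrixP => i j; rewrite !mxE hs ht.
exists (odd_perm s (+) odd_perm t^-1).
by rewrite !det_mulmx !det_perm signr_addb -!mulrA [\det _ * _]mulrC.
Qed.

Lemma minor_subdet (T S : {set 'I_n}) (h : #|S| = #|T|) :
  minor B T S = subdet (fun i => enum_val (cast_ord h i)) (fun j => enum_val j).
Proof. by rewrite /minor; case: eqP => // h'; rewrite (eq_irrelevance h h'). Qed.

Lemma subdet_minor k (r c : 'I_k -> 'I_n) : injective r -> injective c ->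
  exists p : nat, subdet r c = (-1) ^+ p * minor B (im r) (im c).
Proof.
move=> r_inj c_inj; have hc := card_im c_inj.
have hS : #|im c| = #|im r| by rewrite hc card_im.
rewrite (minor_subdet hS) (subdet_cast (esym hc)).
apply: subdet_reorder.
- by move=> i j /r_inj /cast_ord_inj.
- by move=> i j /c_inj /cast_ord_inj.
- by rewrite im_cast (im_cast hS (enum_val (A := mem (im r)))) im_enum_val.
- by rewrite im_cast im_enum_val.
Qed.

Lemma subdet_eq_rows k (r c : 'I_k -> 'I_n) i1 i2 : i1 != i2 -> r i1 = r i2 -> subdet r c = 0.
Proof. by move=> ne e; apply: (determinant_alternate ne) => j; rewrite !mxE e. Qed.

Lemma cofactor_subdet k (r c : 'I_k.+1 -> 'I_n) i0 j0 :
  cofactor (\matrix_(i, j) B (r i) (c j)) i0 j0 =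
  (-1) ^+ (i0 + j0) * subdet (r \o lift i0) (c \o lift j0).
Proof. by rewrite /cofactor; congr (_ * \det _); apply/matrixP => i j; rewrite !mxE. Qed.

End Subdeterminants.

Section FirstRows.
Variable n' : nat.
Local Notation n := n'.+1.

Definition first_idx k (i : 'I_k) : 'I_n := inord i.

Lemma first_idx_val k (i : 'I_k) : (k <= n)%N -> first_idx i = i :> nat.
Proof. by move=> hk; rewrite /first_idx inordK // (leq_trans (ltn_ord i) hk). Qed.

Lemma first_idx_inj k : (k <= n)%N -> injective (@first_idx k).
Proof. by move=> hk i j /(congr1 (@nat_of_ord _)); rewrite !first_idx_val // => /val_inj. Qed.

Lemma first_idx_lift j (l : 'I_j) : first_idx (lift ord_max l) = first_idx l.
Proof. by rewrite /first_idx lift_max. Qed.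

Lemma im_first_idx k : (k <= n)%N -> im (@first_idx k) = first_rows n k.
Proof.
move=> hk; apply/setP => x; rewrite /first_rows inE.
apply/imsetP/idP => [[i _ ->]|xk]; first by rewrite first_idx_val.
by exists (Ordinal xk) => //; apply/val_inj; rewrite /= first_idx_val.
Qed.

Lemma first_idx_Ordinal (t : 'I_n) k (ht : (t < k)%N) : first_idx (Ordinal ht) = t.
Proof. by apply/val_inj; rewrite /first_idx /= inordK. Qed.

Lemma card_first_rows k : (k <= n)%N -> #|first_rows n k| = k.
Proof. by move=> hk; rewrite -(im_first_idx hk) card_im //; exact: first_idx_inj. Qed.

End FirstRows.
Arguments first_idx {n' k}.

Section SchurComplement.
Variables (K : fieldType) (n' : nat) (B : 'M[K]_n'.+1).
Local Notation n := n'.+1.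

Definition top_mx j (cY : 'I_j -> 'I_n) : 'M[K]_j :=
  \matrix_(l, j') B (first_idx l) (cY j').

(* [coef cY t] holds the coefficients of row [t] of [B], restricted to the
   columns [cY], as a combination of the first [j] rows; [resid cY z t] is what
   is left in column [z], i.e. the Schur complement
   det B([j] + t, cY + z) / det B([j], cY). *)
Definition coef j (cY : 'I_j -> 'I_n) (t : 'I_n) : 'rV[K]_j :=
  (\row_j' B t (cY j')) *m invmx (top_mx cY).

Definition resid j (cY : 'I_j -> 'I_n) (z t : 'I_n) : K :=
  B t z - \sum_l coef cY t 0 l * B (first_idx l) z.

Definition coef_resid_mx j (cY : 'I_j -> 'I_n) z (r : 'I_j.+1 -> 'I_n) : 'M[K]_j.+1 :=
  \matrix_(i, l) if unlift ord_max l is Some l' then coef cY (r i) 0 l' else resid cY z (r i).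

Section FixedColumns.
Variables (j : nat) (cY : 'I_j -> 'I_n).
Hypothesis top_unit : top_mx cY \in unitmx.

Lemma coef_sum t j' : \sum_l coef cY t 0 l * B (first_idx l) (cY j') = B t (cY j').
Proof.
have /matrixP/(_ 0 j') : coef cY t *m top_mx cY = \row_j' B t (cY j').
  by rewrite /coef mulmxKV.
by rewrite !mxE => <-; apply: eq_bigr => l _; rewrite /top_mx !mxE.
Qed.

Lemma coef_unique t (w : 'rV[K]_j) :
  (forall j', \sum_l w 0 l * B (first_idx l) (cY j') = B t (cY j')) -> coef cY t = w.
Proof.
move=> hw; apply: (can_inj (mulmxK top_unit)); rewrite /coef mulmxKV //.
by apply/matrixP => i j'; rewrite (ord1 i) !mxE -hw; apply: eq_bigr => l _; rewrite /top_mx !mxE.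
Qed.

Lemma coef_cramer t l :
  coef cY t 0 l = (\det (top_mx cY))^-1 *
    subdet B (fun i => if i == l then t else first_idx i) cY.
Proof.
rewrite /coef /invmx top_unit -scalemxAr mxE; congr (_ * _).
rewrite mxE /subdet (expand_det_row _ l); apply: eq_bigr => i _.
rewrite !mxE eqxx; congr (_ * (_ * \det _)); apply/matrixP => i' j'.
by rewrite !mxE eq_sym (negPf (neq_lift _ _)).
Qed.

Lemma coef_first (i l : 'I_j) : coef cY (first_idx i) 0 l = (i == l)%:R.
Proof.
rewrite /coef; have -> : \row_j' B (first_idx i) (cY j') = row i (top_mx cY).
  by apply/matrixP => i' j'; rewrite !mxE.
by rewrite -row_mul mulmxV // !mxE.
Qed.

Lemma resid_first z (i : 'I_j) : resid cY z (first_idx i) = 0.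
Proof.
rewrite /resid (bigD1 i) //= big1 => [|l li]; last by rewrite coef_first eq_sym (negPf li) mul0r.
by rewrite coef_first eqxx mul1r addr0 subrr.
Qed.

Lemma det_coef_resid_first z :
  \det (coef_resid_mx cY z first_idx) = resid cY z (first_idx (@ord_max j)).
Proof.
rewrite (expand_det_col_single (i := ord_max) (j := ord_max)) => [|i]; last first.
  case: (unliftP ord_max i) => [i' ->|->]; rewrite ?eqxx //.
  by rewrite mxE unlift_none first_idx_lift resid_first.
rewrite mxE unlift_none /cofactor -signr_odd addnn odd_double expr0 mul1r.
have -> : row' ord_max (col' ord_max (coef_resid_mx cY z first_idx)) = 1%:M.
  by apply/matrixP => i l; rewrite !mxE liftK first_idx_lift coef_first.
by rewrite det1 mulr1.
Qed.

End FixedColumns.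

Lemma subdet_factor j (cY : 'I_j -> 'I_n) (c r : 'I_j.+1 -> 'I_n) z i0 :
  top_mx cY \in unitmx -> c i0 = z -> (forall i, c (lift i0 i) = cY i) ->
  subdet B r c =
  \det (coef_resid_mx cY z r) * ((-1) ^+ (@ord_max j + i0) * \det (top_mx cY)).
Proof.
move=> top_unit ci0 cY_lift.
pose N := \matrix_(l, j')
  (if unlift ord_max l is Some l' then B (first_idx l') (c j') else (j' == i0)%:R) : 'M[K]_j.+1.
have -> : subdet B r c = \det (coef_resid_mx cY z r *m N).
  congr (\det _); apply/matrixP => i j'; rewrite !mxE (bigD1_ord ord_max) //= !mxE unlift_none.
  under eq_bigr do rewrite !mxE liftK.
  case: (unliftP i0 j') => [j''|] ->.
  - by rewrite eq_sym (negPf (neq_lift _ _)) mulr0 add0r cY_lift coef_sum.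
  - by rewrite eqxx mulr1 ci0 /resid subrK.
rewrite det_mulmx; congr (_ * _).
rewrite (expand_det_row_single (i := ord_max) (j := i0)) => [|j' j'i0]; last first.
  by rewrite /N mxE unlift_none (negPf j'i0).
rewrite /N mxE unlift_none eqxx mul1r /cofactor; congr (_ * \det _).
by apply/matrixP => i j'; rewrite !mxE liftK cY_lift.
Qed.

Lemma resid_extend j (cY : 'I_j -> 'I_n) y z t :
  top_mx cY \in unitmx -> top_mx (extend cY y) \in unitmx ->
  resid cY z t = resid (extend cY y) z t +
    coef (extend cY y) t 0 ord_max * resid cY z (first_idx (@ord_max j)).
Proof.
move=> top_unit top_unit'; set c' := coef (extend cY y) t.
have coefE : coef cY t =
    \row_l (c' 0 (lift ord_max l) + c' 0 ord_max * coef cY (first_idx (@ord_max j)) 0 l).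
  apply: (coef_unique top_unit) => j'.
  under eq_bigr do rewrite mxE mulrDl -mulrA.
  rewrite big_split /= -mulr_sumr coef_sum //.
  have := coef_sum top_unit' t (lift ord_max j'); rewrite extend_lift => <-.
  rewrite (bigD1_ord ord_max) //= addrC; congr (_ + _).
  by apply: eq_bigr => l _; rewrite first_idx_lift.
rewrite /resid coefE; under eq_bigr do rewrite mxE mulrDl -mulrA.
rewrite big_split /= -mulr_sumr (bigD1_ord ord_max) //=.
under [X in _ = _ - (_ + X) + _]eq_bigr do rewrite first_idx_lift.
ring.
Qed.

End SchurComplement.

Section TopMinors.
Variables (K : fieldType) (R : realType) (v : K -> R).
Hypothesis v_nonarch : nonarch_valuation v.
Variables (n' : nat) (B : 'M[K]_n'.+1).
Local Notation n := n'.+1.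
Hypothesis B_triu : upper_triangular B.
Hypothesis top_fin : forall S : {set 'I_n}, nu v (minor B (first_rows n #|S|) S) \is a fin_num.
Hypothesis top_submod :
  submodular (fun S : {set 'I_n} => nu v (minor B (first_rows n #|S|) S)).

Definition top_val (X : {set 'I_n}) : R := v (minor B (first_rows n #|X|) X).

Lemma top_minor_neq0 (X : {set 'I_n}) : minor B (first_rows n #|X|) X != 0.
Proof. by apply/negP => /eqP X0; move: (top_fin X); rewrite /nu X0 eqxx. Qed.

Lemma nu_top (X : {set 'I_n}) : nu v (minor B (first_rows n #|X|) X) = (- top_val X)%:E.
Proof. by rewrite /nu (negPf (top_minor_neq0 X)). Qed.

Lemma top_val_supermodular (S T : {set 'I_n}) :
  top_val S + top_val T <= top_val (S :&: T) + top_val (S :|: T).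
Proof. by have := top_submod S T; rewrite /= !nu_top -!EFinD lee_fin => h; lra. Qed.

Lemma top_val_increment_mono (Y : {set 'I_n}) (y z : 'I_n) :
  y \notin Y -> y != z ->
  top_val (z |: Y) - top_val Y <= top_val (z |: (y |: Y)) - top_val (y |: Y).
Proof.
move=> yY yz; have := top_val_supermodular (y |: Y) (z |: Y).
have -> : (y |: Y) :&: (z |: Y) = Y.
  apply/setP => x; rewrite !inE; have [->|xy] := eqVneq x y; last by case: (x \in Y); rewrite ?orbT.
  by rewrite (negPf yz) (negPf yY).
have -> : (y |: Y) :|: (z |: Y) = z |: (y |: Y).
  by apply/setP => x; rewrite !inE orbCA -orbA orbb.
by move=> h; lra.
Qed.

Lemma subdet_first_rows k (r c : 'I_k -> 'I_n) : injective r -> injective c ->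
  im r = first_rows n k -> subdet B r c != 0 /\ v (subdet B r c) = top_val (im c).
Proof.
move=> r_inj c_inj rk; have [p ->] := subdet_minor B r_inj c_inj.
rewrite rk -{1}(card_im c_inj) mulf_eq0 signr_eq0 (negPf (top_minor_neq0 _)).
by rewrite val_signM // -{1}(card_im c_inj).
Qed.

Lemma top_mx_det j (cY : 'I_j -> 'I_n) : injective cY -> (j <= n)%N ->
  \det (top_mx B cY) != 0 /\ v (\det (top_mx B cY)) = top_val (im cY).
Proof.
move=> cY_inj hj.
by apply: (subdet_first_rows (r := first_idx)); [exact: first_idx_inj | | exact: im_first_idx].
Qed.

Definition top_minor_bound m := forall k (r c : 'I_k -> 'I_n), injective c ->
  (forall i, (r i < m)%N) -> (forall i, (c i < m)%N) ->
  val_ge v (subdet B r c) (top_val (im c)).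

Section InductionStep.
Variable m : nat.
Hypothesis m_lt_n : (m < n)%N.
Hypothesis IH : top_minor_bound m.
Let z : 'I_n := Ordinal m_lt_n.

Lemma lt_of_ne_z (x : 'I_n) : (x < m.+1)%N -> x != z -> (x < m)%N.
Proof. by rewrite ltnS leq_eqVlt -val_eqE /= => /orP[->|]. Qed.

Definition inj_below j (cY : 'I_j -> 'I_n) := injective cY /\ forall i, (cY i < m)%N.

Lemma inj_below_sub j (cY : 'I_j -> 'I_n) : inj_below cY -> im cY \subset first_rows n m.
Proof. by case=> _ cY_lt; apply/subsetP => x /imsetP[i _ ->]; rewrite inE cY_lt. Qed.

Lemma inj_below_le j (cY : 'I_j -> 'I_n) : inj_below cY -> (j <= m)%N.
Proof.
move=> cb; rewrite -(card_im (proj1 cb)) -(card_first_rows (ltnW m_lt_n)).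
exact/subset_leq_card/inj_below_sub.
Qed.

Lemma inj_below_top_det j (cY : 'I_j -> 'I_n) : inj_below cY ->
  \det (top_mx B cY) != 0 /\ v (\det (top_mx B cY)) = top_val (im cY).
Proof.
by move=> cb; apply: top_mx_det (proj1 cb) _; apply: leq_trans (inj_below_le cb) (ltnW _).
Qed.

Lemma inj_below_top_unit j (cY : 'I_j -> 'I_n) : inj_below cY -> top_mx B cY \in unitmx.
Proof. by move=> cb; rewrite unitmxE unitfE; case: (inj_below_top_det cb). Qed.

Lemma z_notin_below j (cY : 'I_j -> 'I_n) : inj_below cY -> z \notin im cY.
Proof. by move=> cb; apply/negP => /(subsetP (inj_below_sub cb)); rewrite inE ltnn. Qed.

Lemma inj_below_extend j (cY : 'I_j -> 'I_n) y : inj_below cY -> y \notin im cY ->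
  (y < m)%N -> inj_below (extend cY y).
Proof.
move=> [cY_inj cY_lt] yY ym; split; first exact: extend_inj.
by move=> i; rewrite /extend; case: (unlift _ i).
Qed.

Lemma inj_below_lift j (c : 'I_j.+1 -> 'I_n) i0 : injective c ->
  (forall i, (c i < m.+1)%N) -> c i0 = z -> inj_below (c \o lift i0).
Proof.
move=> c_inj c_lt ci0; split=> [i1 i2 /c_inj/lift_inj //|i].
by apply: lt_of_ne_z (c_lt _) _; rewrite -ci0 (inj_eq c_inj) eq_sym neq_lift.
Qed.

Lemma exists_below_notin j (cY : 'I_j -> 'I_n) : inj_below cY -> (j < m)%N ->
  exists2 y : 'I_n, (y < m)%N & y \notin im cY.
Proof.
move=> cb jm; have /subsetPn[y] : ~~ (first_rows n m \subset im cY).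
  apply: contraL jm => /subset_leq_card.
  by rewrite card_first_rows ?(ltnW m_lt_n) // (card_im (proj1 cb)) -leqNgt.
by rewrite inE => ym yY; exists y.
Qed.

Lemma top_val_supermodular_z (Y : {set 'I_n}) : Y \subset first_rows n m ->
  top_val (z |: Y) + top_val (first_rows n m) <= top_val Y + top_val (first_rows n m.+1).
Proof.
move=> /subsetP Ym; have := top_val_supermodular (z |: Y) (first_rows n m).
have -> : (z |: Y) :&: first_rows n m = Y.
  apply/setP => x; rewrite !inE; have [->|_] := eqVneq x z.
    by rewrite ltnn andbF; apply/esym/negP => /Ym; rewrite inE ltnn.
  by apply/andb_idr => /Ym; rewrite inE.
have -> : (z |: Y) :|: first_rows n m = first_rows n m.+1.
  apply/setP => x; rewrite !inE [RHS]ltnS [RHS]leq_eqVlt -val_eqE /= -orbA.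
  by congr (_ || _); apply/orb_idl => /Ym; rewrite inE.
by [].
Qed.

Lemma coef_val_ge j (cY : 'I_j -> 'I_n) (t : 'I_n) (l : 'I_j) : inj_below cY -> (t < m)%N ->
  val_ge v (coef B cY t 0 l) 0.
Proof.
move=> cb tm; have [det0 detv] := inj_below_top_det cb.
rewrite coef_cramer ?inj_below_top_unit // -(addNr (top_val (im cY))).
apply: (val_geM v_nonarch); first by rewrite -detv -(valV v_nonarch) //; exact: val_ge_val.
apply: IH; [exact: (proj1 cb) | move=> i | exact: (proj2 cb)].
case: eqP => // _; rewrite first_idx_val; first exact: leq_trans (ltn_ord i) (inj_below_le cb).
by apply: leq_trans (inj_below_le cb) (ltnW _).
Qed.

Lemma resid_val_next j (cY : 'I_j -> 'I_n) : inj_below cY -> (j < m)%N ->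
  val_ge v (resid B cY z (first_idx (@ord_max j)))
    (top_val (z |: im cY) - top_val (im cY)).
Proof.
move=> cb jm; have top_unit := inj_below_top_unit cb.
have [det0 detv] := inj_below_top_det cb.
have hj : (j.+1 <= n)%N by apply: leq_trans jm (ltnW _).
have [sub0 subv] := subdet_first_rows (first_idx_inj hj)
  (extend_inj (proj1 cb) (z_notin_below cb)) (im_first_idx hj).
rewrite im_extend (subdet_factor first_idx top_unit (extend_max _ _) (extend_lift _ _))
  det_coef_resid_first // in sub0 subv.
rewrite mulf_eq0 !negb_or mulf_eq0 signr_eq0 /= in sub0; case/andP: sub0 => resid0 _.
rewrite /val_ge -subv (valM v_nonarch) ?mulf_neq0 ?signr_eq0 // (val_signM v_nonarch).
by rewrite detv addrK lexx orbT.
Qed.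

Lemma resid_val_ge j (cY : 'I_j -> 'I_n) (t : 'I_n) : inj_below cY -> (t < m)%N ->
  val_ge v (resid B cY z t) (top_val (z |: im cY) - top_val (im cY)).
Proof.
move=> cb tm; have [d jdm] : exists d, (j + d)%N = m.
  by exists (m - j)%N; rewrite subnKC // (inj_below_le cb).
elim: d j cY cb jdm => [|d IHd] j cY cb jdm.
  rewrite addn0 in jdm; rewrite -jdm in tm.
  by rewrite -(first_idx_Ordinal tm) (resid_first (inj_below_top_unit cb)) val_ge0.
have jm : (j < m)%N by rewrite -jdm addnS ltnS leq_addr.
case: (ltngtP t j) => [tj|jt|tj].
- by rewrite -(first_idx_Ordinal tj) (resid_first (inj_below_top_unit cb)) val_ge0.
- have [y ym yY] := exists_below_notin cb jm.
  have cb' := inj_below_extend cb yY ym.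
  rewrite (resid_extend _ _ (inj_below_top_unit cb) (inj_below_top_unit cb')).
  apply: (val_geD v_nonarch).
    apply: val_geW (IHd _ _ cb' _); last by rewrite addSnnS.
    by rewrite im_extend; apply: top_val_increment_mono; rewrite // -val_eqE /= neq_ltn ym.
  rewrite -[X in val_ge _ _ X]add0r; apply: (val_geM v_nonarch).
    exact: coef_val_ge cb' tm.
  exact: resid_val_next cb jm.
- have hj : (j.+1 <= n)%N by apply: leq_trans jm (ltnW _).
  have -> : t = first_idx (@ord_max j) by apply/val_inj; rewrite /= (first_idx_val _ hj).
  exact: resid_val_next.
Qed.

Lemma val_diag_z : v (B z z) = top_val (first_rows n m.+1) - top_val (first_rows n m).
Proof.
have hm : (m <= n)%N := ltnW m_lt_n.
have zE : first_idx (@ord_max m) = z by apply/val_inj; rewrite /= first_idx_val.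
have Bzz : subdet B (@first_idx n' m.+1) first_idx =
    B z z * subdet B (@first_idx n' m) first_idx.
  rewrite /subdet (expand_det_row_single (i := ord_max) (j := ord_max)) => [|l]; last first.
    case: (unliftP ord_max l) => [l' ->|->]; rewrite ?eqxx // mxE zE first_idx_lift => _.
    by apply: B_triu; rewrite /= first_idx_val ?ltn_ord // ltnW.
  rewrite mxE zE /cofactor -signr_odd addnn odd_double mul1r; congr (_ * \det _).
  by apply/matrixP => i l; rewrite !mxE !first_idx_lift.
have [sub1_0 sub1_v] :=
  subdet_first_rows (first_idx_inj m_lt_n) (first_idx_inj m_lt_n) (im_first_idx m_lt_n).
have [sub0_0 sub0_v] := subdet_first_rows (first_idx_inj hm) (first_idx_inj hm) (im_first_idx hm).
rewrite Bzz mulf_eq0 negb_or in sub1_0; case/andP: sub1_0 => Bzz0 _.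
move: sub1_v; rewrite Bzz (valM v_nonarch) // sub0_v !im_first_idx // => <-.
by rewrite addrK.
Qed.

Lemma val_ge_subdet_z_notin_cols k (r c : 'I_k -> 'I_n) : injective c ->
  (forall i, (r i < m.+1)%N) -> (forall i, (c i < m)%N) ->
  val_ge v (subdet B r c) (top_val (im c)).
Proof.
move=> c_inj r_lt c_lt; case: (pickP (fun i => r i == z)) => [i1 /eqP ri1|r_avoid].
  by rewrite /subdet (det_zero_row (i := i1)) ?val_ge0 // => j; rewrite mxE ri1 B_triu.
by apply: IH => // i; apply: lt_of_ne_z (r_lt i) (negbT (r_avoid i)).
Qed.

Lemma val_ge_subdet_z_row_col j (r c : 'I_j.+1 -> 'I_n) i0 i1 : injective c ->
  (forall i, (r i < m.+1)%N) -> (forall i, (c i < m.+1)%N) -> c i0 = z -> r i1 = z ->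
  val_ge v (subdet B r c) (top_val (im c)).
Proof.
move=> c_inj r_lt c_lt ci0 ri1; have cb := inj_below_lift c_inj c_lt ci0.
case: (pickP (fun i => (i != i1) && (r i == z))) => [i2 /andP[i21 /eqP ri2]|r_once].
  by rewrite (subdet_eq_rows _ _ i21 (etrans ri2 (esym ri1))) val_ge0.
have r'_lt i : (r (lift i1 i) < m)%N.
  apply: lt_of_ne_z (r_lt _) _.
  by move: (r_once (lift i1 i)) => /=; rewrite eq_sym neq_lift => /negbT.
rewrite /subdet (expand_det_row_single (i := i1) (j := i0)) => [|l li0]; last first.
  rewrite mxE ri1 B_triu //; apply: lt_of_ne_z (c_lt l) _.
  by rewrite -ci0 (inj_eq c_inj).
rewrite mxE ri1 ci0 cofactor_subdet; have Bzz := val_diag_z.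
apply: val_geW (val_geM v_nonarch (val_ge_val v (B z z))
  (val_geM v_nonarch (val_ge_sign v_nonarch _) (IH (proj1 cb) r'_lt (proj2 cb)))).
have := top_val_supermodular_z (inj_below_sub cb).
by rewrite Bzz (im_lift c i0) ci0 => h; lra.
Qed.

Lemma val_ge_subdet_z_col j (r c : 'I_j.+1 -> 'I_n) i0 : injective c ->
  (forall i, (r i < m)%N) -> (forall i, (c i < m.+1)%N) -> c i0 = z ->
  val_ge v (subdet B r c) (top_val (im c)).
Proof.
move=> c_inj r_lt c_lt ci0; have cb := inj_below_lift c_inj c_lt ci0.
have [_ detv] := inj_below_top_det cb.
rewrite (subdet_factor r (inj_below_top_unit cb) ci0 (fun i => erefl)).
have -> : top_val (im c) =
    (top_val (z |: im (c \o lift i0)) - top_val (im (c \o lift i0))) + (0 + 0) +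
    (0 + top_val (im (c \o lift i0))) by rewrite (im_lift c i0) ci0; lra.
apply: (val_geM v_nonarch); last first.
  by apply: (val_geM v_nonarch); [exact: val_ge_sign | rewrite -detv; exact: val_ge_val].
rewrite (expand_det_col _ ord_max); apply: (val_ge_sum v_nonarch) => i _.
rewrite mxE unlift_none; apply: (val_geM v_nonarch); first exact: resid_val_ge.
apply: (val_geM v_nonarch); first exact: val_ge_sign.
by apply: (val_ge_det v_nonarch) => i' l; rewrite !mxE liftK; exact: coef_val_ge.
Qed.

Lemma top_minor_bound_step : top_minor_bound m.+1.
Proof.
move=> [|j] r c c_inj r_lt c_lt; first by apply: val_ge_subdet_z_notin_cols => // -[].
case: (pickP (fun i => c i == z)) => [i0 /eqP ci0|c_avoid]; last first.
  by apply: val_ge_subdet_z_notin_cols => // i; apply: lt_of_ne_z (c_lt i) (negbT (c_avoid i)).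
case: (pickP (fun i => r i == z)) => [i1 /eqP ri1|r_avoid].
  exact: val_ge_subdet_z_row_col ci0 ri1.
by apply: val_ge_subdet_z_col ci0 => // i; apply: lt_of_ne_z (r_lt i) (negbT (r_avoid i)).
Qed.

End InductionStep.

Lemma top_minor_bound_le m : (m <= n)%N -> top_minor_bound m.
Proof.
elim: m => [_|m IHm hm]; last exact: top_minor_bound_step hm (IHm (ltnW hm)).
move=> [|k] r c c_inj r_lt c_lt; last by have := c_lt ord0.
have r_first : im r = first_rows n 0 by apply/setP => x; rewrite !inE; apply/imsetP => -[[]].
have r_inj : injective r by case.
have [_ <-] := subdet_first_rows r_inj c_inj r_first.
exact: val_ge_val.
Qed.

End TopMinors.

Theorem lemma3p4 (K : fieldType) (R : realType) (val : K -> R)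
  (hval : nonarch_valuation val) (n : nat) (B : 'M[K]_n)
  (hB : upper_triangular B)
  (hfin : forall S : {set 'I_n},
      nu val (minor B (first_rows n #|S|) S) \is a fin_num)
  (hsub : submodular (fun S : {set 'I_n} => nu val (minor B (first_rows n #|S|) S))) :
  forall S T : {set 'I_n}, #|S| = #|T| ->
    (nu val (minor B T S) <= nu val (minor B (first_rows n #|S|) S))%E.
Proof.
case: n B hB hfin hsub => [|n'] B hB hfin hsub S T hST.
  by have -> : T = first_rows 0 #|S| by apply/setP => -[].
rewrite (nu_top hfin) -val_geE (minor_subdet B hST).
have := top_minor_bound_le hval hB hfin hsub (leqnn n'.+1)
  (@enum_val_inj _ (mem S)) (fun i => ltn_ord (enum_val (cast_ord hST i)))
  (fun i => ltn_ord _).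
by rewrite im_enum_val.
Qed.
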